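(* Let $q=p^m$ with $p$ an odd prime, $q\equiv 1\pmod 3$ and $q\geq 13$. Let $\pi,\sigma\in P$. Then $hd(\pi^{\triangle},\sigma^{\triangle})=hd(\pi,\sigma)-3$ if and only if $\pi\sigma$ is an edge of $C_P(q)$.
   Context: $PGL(2,q)$ is the group of maps $x\mapsto\frac{ax+b}{cx+d}$ ($a,b,c,d\in GF(q)$, $ad\neq bc$) acting on $GF(q)\cup\{\infty\}$ with the usual conventions ($-d/c\mapsto\infty$, $\infty\mapsto a/c$ if $c\neq0$, $\infty\mapsto\infty$ if $c=0$). For $K,i\in GF(q)$ and $r\in GF(q)\setminus\{0\}$, $f_{K,r,i}$ is the element of $PGL(2,q)$ with $f_{K,r,i}(x)=K+\frac{r}{x-i}$ for $x\notin\{i,\infty\}$, $f_{K,r,i}(\infty)=K$, $f_{K,r,i}(i)=\infty$; $P$ is the set of all such $f_{K,r,i}$. $hd(\pi,\sigma)$ is the number of points at which $\pi,\sigma$ differ. With distinguished element $F=\infty$, $\pi^{\triangle}$ is the permutation with $\pi^{\triangle}(\pi^{-1}(\infty))=\pi(\infty)$, $\pi^{\triangle}(\infty)=\infty$, $\pi^{\triangle}(x)=\pi(x)$ otherwise. The contraction graph $C_P(q)$ has vertex set $PGL(2,q)$, with distinct $\pi,\sigma$ adjacent iff $hd(\pi^{\triangle},\sigma^{\triangle})=q-4$. *)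

From HB Require Import structures.
From mathcomp Require Import all_boot all_order all_algebra all_field.
Set Implicit Arguments. Unset Strict Implicit. Unset Printing Implicit Defensive.
Import GRing.Theory.
Local Open Scope ring_scope.

(* The projective line GF(q) ∪ {∞} is [option F]; [None] is ∞. *)

Definition fKri (F : fieldType) (K r i : F) (x : option F) : option F :=
  match x with
  | None => Some K
  | Some y => if y == i then None else Some (K + r / (y - i))
  end.

Definition inP (F : fieldType) (pi : option F -> option F) : Prop :=
  exists K r i : F, r != 0 /\ pi = fKri K r i.

Definition hd (F : finFieldType) (pi sigma : option F -> option F) : nat :=
  #|[pred x : option F | pi x != sigma x]|%N.

Definition contr (F : fieldType) (pi : option F -> option F) (x : option F)
  : option F :=
  match x with
  | None => None
  | Some _ => if pi x == None then pi None else pi x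
  end.

Definition CP_adj (F : finFieldType) (pi sigma : option F -> option F) : Prop :=
  pi <> sigma /\ hd (contr pi) (contr sigma) = (#|F| - 4)%N.

From HB Require Import structures.
From mathcomp Require Import all_boot all_order all_algebra all_field.
From mathcomp Require Import all_fingroup all_solvable ring zify.
Set Implicit Arguments. Unset Strict Implicit. Unset Printing Implicit Defensive.
Import GRing.Theory FinRing.Theory.
Local Open Scope ring_scope.

(* Two distinct maps of P agree at the roots of a nonzero quadratic, at infinity only when
   the quadratic degenerates to a linear one, hence at most twice in all.  Contracting at
   infinity only changes the values at infinity and at the two poles i, i', and adds at most
   three agreements; it adds three exactly when i <> i', K <> K', sigma(i) = K and
   pi(i') = K'.  In that case both residues equal (i - i')(K - K'), and the maps also agree
   at i' - c(i - i') for each primitive cube root of unity c, which exists as q = 1 mod 3.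
   So a gain of three means two agreements before and five after the contraction, i.e.
   hd(contr pi, contr sigma) = q - 4; conversely, five agreements after contraction force
   that situation. *)

Lemma finField_cube_root_unity (F : finFieldType) :
  (#|F| %% 3 = 1)%N -> exists2 c : F, c ^+ 2 + c + 1 = 0 & c != 1.
Proof.
move=> q3.
have three_dvd : (3 %| #|[set: {unit F}]%G|)%N.
  by rewrite card_finField_unit; apply/dvdnP; exists (#|F| %/ 3)%N;
     rewrite {1}(divn_eq #|F| 3) q3 addn1.
have [x _ ox] := Cauchy (isT : prime 3) three_dvd.
have x3 : val x ^+ 3 = 1 by rewrite -val_unitX -ox expg_order val_unit1.
have x1 : val x != 1.
  apply/eqP => x_1; have : x = 1%g by apply: val_inj; rewrite x_1 val_unit1.
  by move=> x_1g; move: ox; rewrite x_1g order1.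
exists (val x) => //; apply: (mulfI (_ : val x - 1 != 0)); first by rewrite subr_eq0.
have -> : (val x - 1) * (val x ^+ 2 + val x + 1) = val x ^+ 3 - 1 by ring.
by rewrite x3 subrr mulr0.
Qed.

Definition agreements (T : finType) (U : eqType) (f g : T -> U) : nat :=
  (\sum_x (f x == g x))%N.

Lemma agreements_card (T : finType) (U : eqType) (f g : T -> U) :
  agreements f g = #|[pred x | f x == g x]|.
Proof.
by rewrite -sum1_card big_mkcond; apply: eq_bigr => x _; rewrite inE; case: eqP.
Qed.

Lemma agreements_eq_off (T : finType) (U : eqType) (A : {set T})
    (f g f' g' : T -> U) :
  {in ~: A, f =1 f'} -> {in ~: A, g =1 g'} ->
  (agreements f g + \sum_(x in A) (f' x == g' x)
   = agreements f' g' + \sum_(x in A) (f x == g x))%N.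
Proof.
move=> ff' gg'.
have off : (\sum_(x | x \notin A) (f x == g x) = \sum_(x | x \notin A) (f' x == g' x))%N.
  by apply: eq_bigr => x xA; rewrite ff' ?gg' ?inE.
rewrite /agreements (bigID (mem A)) [in RHS](bigID (mem A)) /= off.
by rewrite addnAC [RHS]addnAC [in RHS](addnC (\sum_(x in A) _)%N).
Qed.

Lemma hd_add_agreements (F : finFieldType) (f g : option F -> option F) :
  (hd f g + agreements f g)%N = #|F|.+1.
Proof.
rewrite /hd -card_option -sum1_card [X in (X + _)%N]big_mkcond /agreements.
by rewrite -big_split -sum1_card; apply: eq_bigr => x _; rewrite inE; case: eqP.
Qed.

Section FieldFacts.
Variable F : fieldType.
Implicit Types a b c u v x K r i : F.

Lemma linear_two_roots b c u v : u != v ->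
  b * u + c = 0 -> b * v + c = 0 -> b = 0 /\ c = 0.
Proof.
move=> uv eu ev.
have b0 : b = 0.
  apply: (mulfI (_ : u - v != 0)); first by rewrite subr_eq0.
  have -> : (u - v) * b = (b * u + c) - (b * v + c) by ring.
  by rewrite eu ev subrr mulr0.
by split=> //; move: eu; rewrite b0 mul0r add0r.
Qed.

Lemma quadratic_three_roots a b c x1 x2 x3 :
  x1 != x2 -> x1 != x3 -> x2 != x3 ->
  a * x1 ^+ 2 + b * x1 + c = 0 -> a * x2 ^+ 2 + b * x2 + c = 0 ->
  a * x3 ^+ 2 + b * x3 + c = 0 -> [/\ a = 0, b = 0 & c = 0].
Proof.
move=> x12 x13 x23 e1 e2 e3.
have slope u v : u != v -> a * u ^+ 2 + b * u + c = 0 ->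
    a * v ^+ 2 + b * v + c = 0 -> a * (u + v) + b = 0.
  move=> uv eu ev; apply: (mulfI (_ : u - v != 0)); first by rewrite subr_eq0.
  have -> : (u - v) * (a * (u + v) + b) = (a * u ^+ 2 + b * u + c) - (a * v ^+ 2 + b * v + c)
    by ring.
  by rewrite eu ev subrr mulr0.
have a0 : a = 0.
  apply: (mulfI (_ : x2 - x3 != 0)); first by rewrite subr_eq0.
  have -> : (x2 - x3) * a = (a * (x1 + x2) + b) - (a * (x1 + x3) + b) by ring.
  by rewrite (slope _ _ x12 e1 e2) (slope _ _ x13 e1 e3) subrr mulr0.
move: e1 e2; rewrite a0 !mul0r !add0r => e1 e2.
by have [] := linear_two_roots x12 e1 e2.
Qed.

Lemma fKri_agree_quadratic K r i K' r' i' x :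
  fKri K r i (Some x) = fKri K' r' i' (Some x) ->
  (K - K') * x ^+ 2 + (r - r' - (K - K') * (i + i')) * x
    + ((K - K') * i * i' - r * i' + r' * i) = 0.
Proof.
have -> : (K - K') * x ^+ 2 + (r - r' - (K - K') * (i + i')) * x
    + ((K - K') * i * i' - r * i' + r' * i) =
    (K - K') * (x - i) * (x - i') + r * (x - i') - r' * (x - i) by ring.
rewrite /=; case: (eqVneq x i) => xi; case: (eqVneq x i') => xi' //=.
- by move=> _; rewrite -xi -xi'; ring.
- move=> [agree].
  have -> : (K - K') * (x - i) * (x - i') + r * (x - i') - r' * (x - i) =
      (x - i) * (x - i') * ((K + r / (x - i)) - (K' + r' / (x - i'))).
    by field; rewrite !subr_eq0 xi xi'.
  by rewrite agree subrr mulr0.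
Qed.

Lemma fKri_eq_of_coefs K r i K' r' i' : r != 0 -> K - K' = 0 ->
  r - r' - (K - K') * (i + i') = 0 -> (K - K') * i * i' - r * i' + r' * i = 0 ->
  fKri K r i = fKri K' r' i'.
Proof.
move=> r0 /subr0_eq <-; rewrite subrr !mul0r subr0 => /subr0_eq <-.
have -> : 0 - r * i' + r * i = r * (i - i') by ring.
by move/eqP; rewrite mulf_eq0 (negbTE r0) subr_eq0 => /eqP ->.
Qed.

Lemma fKri_residues_of_swap K r i K' r' i' : i != i' ->
  Some K = fKri K' r' i' (Some i) -> fKri K r i (Some i') = Some K' ->
  r = (i - i') * (K - K') /\ r' = (i - i') * (K - K').
Proof.
move=> ii'; rewrite /= (negbTE ii') eq_sym (negbTE ii') => -[eK] [eK'].
have d0 : i - i' != 0 by rewrite subr_eq0.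
have d0' : i' - i != 0 by rewrite subr_eq0 eq_sym.
by split; [rewrite -eK' | rewrite eK]; field.
Qed.

Lemma fKri_agree_cube_root c K K' i i' : c ^+ 2 + c + 1 = 0 -> i != i' ->
  fKri K ((i - i') * (K - K')) i (Some (i' - c * (i - i')))
  = fKri K' ((i - i') * (K - K')) i' (Some (i' - c * (i - i'))).
Proof.
move=> c3 ii'.
have d0 : i - i' != 0 by rewrite subr_eq0.
have : c * (1 + c) != 0.
  have -> : c * (1 + c) = -1 by rewrite -[RHS]addr0 -c3; ring.
  by rewrite oppr_eq0 oner_eq0.
rewrite mulf_eq0 negb_or => /andP[c0 c1].
have u_eq : i' - c * (i - i') - i = - (1 + c) * (i - i') by ring.
have v_eq : i' - c * (i - i') - i' = - c * (i - i') by ring.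
have u0 : (i' - c * (i - i') == i) = false.
  by apply/negbTE; rewrite -subr_eq0 u_eq !mulf_neq0 ?oppr_eq0.
have v0 : (i' - c * (i - i') == i') = false.
  by apply/negbTE; rewrite -subr_eq0 v_eq !mulf_neq0 ?oppr_eq0.
rewrite /= u0 v0 u_eq v_eq; congr Some; apply/eqP; rewrite -subr_eq0.
have -> : K + (i - i') * (K - K') / (- (1 + c) * (i - i'))
    - (K' + (i - i') * (K - K') / (- c * (i - i')))
    = (K - K') * (c ^+ 2 + c + 1) / (c * (1 + c)).
  by field; rewrite !oppr_eq0 c0 c1 d0.
by rewrite c3 mulr0 mul0r.
Qed.

Lemma fKri_pole K r i : fKri K r i (Some i) = None.
Proof. by rewrite /= eqxx. Qed.

Lemma fKri_off_pole K r i y : y != i -> fKri K r i (Some y) != None.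
Proof. by move=> yi; rewrite /= (negbTE yi). Qed.

Lemma contr_fKri_pole K r i : contr (fKri K r i) (Some i) = Some K.
Proof. by rewrite /contr fKri_pole. Qed.

Lemma contr_fKri_off K r i y : y != i ->
  contr (fKri K r i) (Some y) = fKri K r i (Some y).
Proof. by move=> /(fKri_off_pole K r) yi; rewrite /contr (negbTE yi). Qed.
End FieldFacts.

Section FiniteFieldFacts.
Variable F : finFieldType.
Implicit Types c K r i : F.

Lemma contr_fKri_eq_off (A : {set option F}) K r i :
  None \in A -> Some i \in A -> {in ~: A, contr (fKri K r i) =1 fKri K r i}.
Proof.
move=> NA iA [y yA|]; last by rewrite inE NA.
by apply: contr_fKri_off; apply: contraTneq yA => ->; rewrite inE iA.
Qed.

Lemma agreements_contr_fKri_same_pole K r K' r' i :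
  agreements (contr (fKri K r i)) (contr (fKri K' r' i))
  = agreements (fKri K r i) (fKri K' r' i).
Proof.
have off := contr_fKri_eq_off _ _ (set21 None (Some i)) (set22 None (Some i)).
have := agreements_eq_off (off K r) (off K' r').
rewrite big_setU1 ?inE // big_set1 big_setU1 ?inE // big_set1 !contr_fKri_pole /= !eqxx.
by rewrite addn1 add1n => /addIn.
Qed.

Lemma agreements_contr_fKri K r i K' r' i' : i != i' ->
  (agreements (contr (fKri K r i)) (contr (fKri K' r' i')) + (K == K')
   = agreements (fKri K r i) (fKri K' r' i') + 1
     + (Some K == fKri K' r' i' (Some i)) + (fKri K r i (Some i') == Some K'))%N.
Proof.
move=> ii'; set A := None |: (Some i |: [set Some i']).
have NA : None \in A by rewrite !inE eqxx.
have iA : Some i \in A by rewrite !inE eqxx orbT.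
have i'A : Some i' \in A by rewrite !inE eqxx !orbT.
have := agreements_eq_off (contr_fKri_eq_off K r NA iA) (contr_fKri_eq_off K' r' NA i'A).
have iNi' : Some i \notin [set Some i'] by rewrite inE.
have i'i : i' != i by rewrite eq_sym.
rewrite /A !big_setU1 ?inE // !big_set1 !contr_fKri_pole.
rewrite (contr_fKri_off _ _ ii') (contr_fKri_off _ _ i'i) !fKri_pole.
rewrite [None == _]eq_sym !(negbTE (fKri_off_pole _ _ _)) //= !addn0 => ->.
by rewrite !addnA.
Qed.

Lemma agreements_fKri_le2 K r i K' r' i' : r != 0 ->
  fKri K r i <> fKri K' r' i' -> (agreements (fKri K r i) (fKri K' r' i') <= 2)%N.
Proof.
move=> r0 neq; rewrite agreements_card leqNgt.
apply/card_gt2P => -[x [y [z [[ax ay az] [xy yz zx]]]]].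
set a := K - K'; set b := r - r' - (K - K') * (i + i').
set c := (K - K') * i * i' - r * i' + r' * i.
suff [a0 b0 c0] : [/\ a = 0, b = 0 & c = 0] by apply: neq; apply: fKri_eq_of_coefs.
have root u : Some u \in [pred x | fKri K r i x == fKri K' r' i' x] ->
    a * u ^+ 2 + b * u + c = 0.
  by rewrite inE => /eqP; apply: fKri_agree_quadratic.
have affine u v : None \in [pred x | fKri K r i x == fKri K' r' i' x] -> u != v ->
    Some u \in [pred x | fKri K r i x == fKri K' r' i' x] ->
    Some v \in [pred x | fKri K r i x == fKri K' r' i' x] -> [/\ a = 0, b = 0 & c = 0].
  rewrite inE => /eqP [eK] uv /root eu /root ev.
  have a0 : a = 0 by rewrite /a eK subrr.
  rewrite a0 !mul0r !add0r in eu ev.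
  by have [] := linear_two_roots uv eu ev.
case: x y z ax ay az xy yz zx => [x|] [y|] [z|] // ax ay az xy yz zx.
- have xz : x != z by rewrite eq_sym.
  exact: quadratic_three_roots xy xz yz (root _ ax) (root _ ay) (root _ az).
- exact: affine _ _ az xy ax ay.
- have xz : x != z by rewrite eq_sym.
  exact: affine _ _ ay xz ax az.
- exact: affine _ _ ax yz ay az.
Qed.

Lemma agreements_contr_fKri_le K r i K' r' i' :
  (agreements (contr (fKri K r i)) (contr (fKri K' r' i'))
   <= agreements (fKri K r i) (fKri K' r' i') + 3)%N.
Proof.
case: (eqVneq i i') => [<-|ii'].
  by rewrite agreements_contr_fKri_same_pole leq_addr.
have := agreements_contr_fKri K r K' r' ii'; lia.
Qed.

Lemma agreements_contr_fKri_eq_add3 K r i K' r' i' :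
  agreements (contr (fKri K r i)) (contr (fKri K' r' i'))
    = (agreements (fKri K r i) (fKri K' r' i') + 3)%N ->
  [&& i != i', K != K', Some K == fKri K' r' i' (Some i)
    & fKri K r i (Some i') == Some K'].
Proof.
case: (eqVneq i i') => [<-|ii'].
  by rewrite agreements_contr_fKri_same_pole; lia.
have := agreements_contr_fKri K r K' r' ii'; lia.
Qed.

Lemma agreements_fKri_ge2 c K r i K' r' i' :
  c ^+ 2 + c + 1 = 0 -> c != 1 -> i != i' ->
  Some K = fKri K' r' i' (Some i) -> fKri K r i (Some i') = Some K' ->
  (2 <= agreements (fKri K r i) (fKri K' r' i'))%N.
Proof.
move=> c3 c1 ii' eK eK'; have [-> ->] := fKri_residues_of_swap ii' eK eK'.
have c2_root : (c ^+ 2) ^+ 2 + c ^+ 2 + 1 = 0.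
  have -> : (c ^+ 2) ^+ 2 + c ^+ 2 + 1 = (c ^+ 2 + c + 1) * (c ^+ 2 - c + 1) by ring.
  by rewrite c3 mul0r.
have c0 : c != 0 by apply: contra_eq_neq c3 => ->; rewrite expr0n !add0r oner_eq0.
rewrite agreements_card; apply/card_gt1P.
exists (Some (i' - c * (i - i'))), (Some (i' - c ^+ 2 * (i - i'))).
rewrite !inE !fKri_agree_cube_root //; split=> //.
have : c * (c - 1) * (i - i') != 0 by rewrite !mulf_neq0 // subr_eq0.
apply: contraNneq => -[e]; apply/eqP.
by transitivity ((i' - c * (i - i')) - (i' - c ^+ 2 * (i - i'))); [ring | rewrite e subrr].
Qed.
End FiniteFieldFacts.

Theorem lemma11 (F : finFieldType) (p m : nat)
  (hp : prime p) (hodd : odd p) (hq : #|F| = (p ^ m)%N)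
  (h3 : (#|F| %% 3 = 1)%N) (h13 : (13 <= #|F|)%N)
  (pi sigma : option F -> option F) (hpi : inP pi) (hsigma : inP sigma) :
  (hd (contr pi) (contr sigma) + 3)%N = hd pi sigma <-> CP_adj pi sigma.
Proof.
move: hpi hsigma => [K [r [i [r0 epi]]]] [K' [r' [i' [_ esigma]]]]; subst pi sigma.
(* The ascriptions select the [finType] instance on [option F] that the lemmas on [fKri]
   use, so that [lia] identifies the [agreements] atoms. *)
have hdA : (hd (fKri K r i) (fKri K' r' i') + agreements (fKri K r i) (fKri K' r' i'))%N
  = #|F|.+1 := hd_add_agreements _ _.
have hdC : (hd (contr (fKri K r i)) (contr (fKri K' r' i'))
    + agreements (contr (fKri K r i)) (contr (fKri K' r' i')))%N
  = #|F|.+1 := hd_add_agreements _ _.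
have leC := agreements_contr_fKri_le K r i K' r' i'.
rewrite /CP_adj; split=> [gain | [neq hd4]].
- have /and4P[ii' KK' /eqP eK /eqP eK'] : [&& i != i', K != K',
      Some K == fKri K' r' i' (Some i) & fKri K r i (Some i') == Some K'].
    by apply: agreements_contr_fKri_eq_add3; lia.
  have neq : fKri K r i <> fKri K' r' i'.
    by move=> /(congr1 (fun f => f None)) [eqK]; rewrite eqK eqxx in KK'.
  have [c c3 c1] := finField_cube_root_unity h3.
  have := agreements_fKri_ge2 c3 c1 ii' eK eK'.
  have := agreements_fKri_le2 r0 neq.
  by split=> //; lia.
- have := agreements_fKri_le2 r0 neq; lia.
Qed.
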